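(* Let $X$ be a regular space. Then $L(X)\leq t(Q_{P}(X))$.
   Context: A function $f\colon X\to Y$ between topological spaces is quasi-continuous at $x\in X$ if for every open $U\ni x$ and every open $V\ni f(x)$ there is a non-empty open $G\subseteq U$ with $f(G)\subseteq V$; $f$ is quasi-continuous if it is so at every point. $Q_{P}(X)$ is the set of quasi-continuous functions $X\to\mathbb{R}$ with the topology of point-wise convergence (subspace topology from $\mathbb{R}^X$). The Lindelöf degree is $L(X)=\aleph_0+\min\{\eta : \text{every open cover of } X \text{ has a subcover of cardinality}\le\eta\}$. The tightness of a space $Z$ is $t(Z)=\sup_{z\in Z} t(z,Z)$, where $t(z,Z)=\aleph_0+\sup\{a(z,A): A\subseteq Z,\ z\in\overline{A}\}$ and $a(z,A)=\min\{|B|: B\subseteq A,\ z\in\overline{B}\}$. *)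

From HB Require Import structures.
From mathcomp Require Import all_boot all_order all_algebra.
From mathcomp Require Import all_classical all_reals all_analysis.
Set Implicit Arguments. Unset Strict Implicit. Unset Printing Implicit Defensive.
Import Order.TTheory GRing.Theory Num.Theory numFieldTopology.Exports numFieldNormedType.Exports.
Local Open Scope classical_set_scope.
Local Open Scope card_scope.

Definition quasi_continuous_at {X Y : topologicalType} (f : X -> Y) (x : X) :=
  forall (U : set X) (V : set Y), open U -> U x -> open V -> V (f x) ->
    exists G : set X, [/\ open G, G !=set0, G `<=` U & f @` G `<=` V].

Definition quasi_continuous {X Y : topologicalType} (f : X -> Y) :=
  forall x, quasi_continuous_at f x.

Definition QP (R : realType) (X : topologicalType) : set {ptws X -> R} :=
  [set f | @quasi_continuous X R f].

Definition lindelof_degree_le (X : topologicalType) (K : Type) :=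
  forall C : set (set X), (forall U, C U -> open U) ->
    \bigcup_(U in C) U = [set: X] ->
    exists D : set (set X),
      [/\ D `<=` C, D #<= [set: K] & \bigcup_(U in D) U = [set: X]].

(* t(S) <= |K| where S carries the subspace topology of Z; the closure of
   A `<=` S in the subspace S is (closure A) `&` S. *)
Definition tightness_le (Z : topologicalType) (S : set Z) (K : Type) :=
  forall (z : Z) (A : set Z), S z -> A `<=` S -> closure A z ->
    exists B : set Z, [/\ B `<=` A, B #<= [set: K] & closure B z].

(* Regularity gives, for each point x, an open V x whose closure lies in a
   member U x of the given open cover.  For a finite s, the indicator of the
   complement of cl(U_{x in s} V x) is quasi-continuous, and along the finite
   sets ordered by inclusion these functions converge pointwise to 0.  Tightness
   keeps at most |K| of them still accumulating at 0; at each point t one of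
   them is < 1, so t lies in U x for some x of its finite set.  The at most
   |K|.aleph_0 = |K| sets U x so obtained cover X; the cardinal identity comes
   from a partition of K into countably infinite blocks, obtained by Zorn. *)

From HB Require Import structures.
From mathcomp Require Import all_boot all_order all_algebra.
From mathcomp Require Import all_classical all_reals all_analysis.
Import numFieldTopology.Exports numFieldNormedType.Exports.
Import Order.TTheory GRing.Theory Num.Theory.
Local Open Scope classical_set_scope.
Local Open Scope card_scope.
Local Open Scope ring_scope.

Lemma countableU T (A B : set T) :
  countable A -> countable B -> countable (A `|` B).
Proof. by move=> cA cB; rewrite -bigcup2E; apply: bigcup_countable => // -[|[|n]]. Qed.

Lemma card_eq_nat_setU_finite T (A B : set T) :
  A #= [set: nat] -> finite_set B -> A `|` B #= [set: nat].
Proof.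
case/card_eqPle => cA natA /finite_set_countable cB; apply/card_eqPle; split.
  exact: countableU.
exact: card_le_trans natA (subset_card_le (@subsetUl _ A B)).
Qed.

Lemma denumerable_subset {K : pointedType} (S : set K) :
  [set: nat] #<= S -> exists2 p, p `<=` S & p #= [set: nat].
Proof.
case/pcard_leP => e; exists (e @` setT); first by move=> _ [n _ <-]; exact: funS.
exact: inj_card_eq inj.
Qed.

Section DenumerablePartition.
Variable K : pointedType.
Hypothesis K_infinite : [set: nat] #<= [set: K].

Definition disjoint_denumerables (F : set (set K)) :=
  (forall p, F p -> p #= [set: nat]) /\ trivIset F id.

Lemma maximal_disjoint_denumerables : exists2 M,
  disjoint_denumerables M & finite_set (~` \bigcup_(p in M) p).
Proof.
have [M [[Mnat Mdisj] Mmax]] : exists M, disjoint_denumerables M /\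
    forall F, M `<` F -> ~ disjoint_denumerables F.
  apply: Zorn_bigcup => G GP Gtot; split.
    by move=> p [F GF Fp]; exact: (GP F GF).1 p Fp.
  move=> p q [F1 G1 Fp] [F2 G2 Fq].
  have [F12|F21] := Gtot F1 F2 G1 G2.
    exact: (GP F2 G2).2 p q (F12 _ Fp) Fq.
  exact: (GP F1 G1).2 p q Fp (F21 _ Fq).
exists M => //; apply/finite_setPn => /denumerable_subset[p pR pnat].
have [w pw] : p !=set0.
  by apply/infinite_setN0/infiniteP; case/card_eqPle: pnat.
apply: (Mmax (M `|` [set p])).
  split; first exact: subsetUl.
  by move=> MpM; have Mp := MpM p (or_intror erefl); apply: (pR w pw); exists p.
split; first by move=> q [/Mnat|->].
move=> q q' [Mq|->] [Mq'|->] [v [qv q'v]] //.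
- by apply: Mdisj => //; exists v.
- by case: (pR v q'v); exists q.
- by case: (pR v qv); exists q'.
Qed.

(* The finite remainder of a maximal family is absorbed into one of its members. *)
Lemma denumerable_partition : exists2 F,
  disjoint_denumerables F & \bigcup_(p in F) p = [set: K].
Proof.
have [M [Mnat Mdisj]] := maximal_disjoint_denumerables.
set Rest := ~` _ => Rest_fin.
have [p1 Mp1] : exists p1, M p1.
  apply: contrapT => noM; move/finite_setPn: Rest_fin; apply.
  apply: card_le_trans K_infinite (subset_card_le _) => y _ [p Mp _].
  by apply: noM; exists p.
pose q := p1 `|` Rest.
have q_apart p w : M p -> p <> p1 -> q w -> ~ p w.
  move=> Mp pp1 [p1w|Rw] pw; last by apply: Rw; exists p.
  by apply: pp1; apply: Mdisj => //; exists w.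
exists ([set q] `|` (M `\ p1)); first split.
- move=> p [->|[/Mnat //]].
  exact: card_eq_nat_setU_finite (Mnat _ Mp1) Rest_fin.
- move=> p p' [->|[Mp pp1]] [->|[Mp' pp1']] [w [pw p'w]] //.
  + by case: (q_apart p' w Mp' pp1' pw p'w).
  + by case: (q_apart p w Mp pp1 p'w pw).
  + by apply: Mdisj => //; exists w.
apply/seteqP; split => // y _.
have [[p Mp py]|Resty] := pselect ((\bigcup_(p in M) p) y); last first.
  by exists q; [left | right].
have [pp1|pp1] := pselect (p = p1); first by exists q; [left | left; rewrite -pp1].
by exists p => //; right.
Qed.

Lemma card_setXnat : [set: K * nat] #<= [set: K].
Proof.
have [F [Fnat Fdisj] Fcover] := denumerable_partition.
have /choice[blk blkP] y : exists p, F p /\ p y.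
  by have : [set: K] y by []; rewrite -Fcover => -[p]; exists p.
have /choice[e eP] p : exists e : nat -> K, F p -> injective e /\ range e `<=` p.
  have [/Fnat/card_eqPle[_ /pcard_leP[ep]]|nFp] := pselect (F p); last first.
    by exists (fun=> point) => /nFp.
  by exists ep => _; split=> [m n|_ [n _ <-]]; [apply: inj; rewrite inE|exact: funS].
have /choice[c cP] p : exists c : K -> nat, F p -> {in p &, injective c}.
  have [/Fnat/card_eqPle[/countable_injP[cp cpP] _]|nFp] := pselect (F p).
    by exists cp.
  by exists (fun=> 0%N) => /nFp.
apply/pcard_injP; exists (fun ym => e (blk ym.1) (pickle (c (blk ym.1) ym.1, ym.2))).
move=> [y m] [y' m'] _ _ /= eq_e.
have [Fy yy] := blkP y; have [Fy' y'y'] := blkP y'.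
have same_blk : blk y = blk y'.
  apply: Fdisj => //; exists (e (blk y) (pickle (c (blk y) y, m))); split.
    by apply: (eP _ Fy).2; exists (pickle (c (blk y) y, m)).
  by rewrite eq_e; apply: (eP _ Fy').2; exists (pickle (c (blk y') y', m')).
move: eq_e; rewrite -same_blk => /(eP _ Fy).1 /(pcan_inj pickleK_inv) [eq_c ->].
by rewrite (cP _ Fy y y') ?inE // same_blk.
Qed.

Lemma card_bigcup_countable_le {I T : Type} (D : set I) (G : I -> set T) :
  D #<= [set: K] -> (forall i, D i -> countable (G i)) ->
  \bigcup_(i in D) G i #<= [set: K].
Proof.
elim/Ppointed: I => I in D G *.
  by rewrite (empty_eq0 D) bigcup_set0 card_ge0.
move=> /pcard_injP[j jP] Gc; have /pcard_injP[f fP] := card_setXnat.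
have {}fP : injective f by move=> x y; apply: fP; rewrite in_setT.
have /choice[idx idxP] t : exists i, (\bigcup_(i in D) G i) t -> D i /\ G i t.
  by have [[i Di Git]|nt] := pselect ((\bigcup_(i in D) G i) t);
    [exists i | exists point => /nt].
have /choice[c cP] i : exists c : T -> nat, D i -> {in G i &, injective c}.
  have [/Gc/countable_injP[ci ?]|nDi] := pselect (D i); first by exists ci.
  by exists (fun=> 0%N) => /nDi.
apply/pcard_injP; exists (fun t => f (j (idx t), c (idx t) t)).
move=> t t'; rewrite !inE => /idxP[Dt Gt] /idxP[Dt' Gt'].
move=> /fP[/jP eq_idx]; have {}eq_idx := eq_idx (mem_set Dt) (mem_set Dt').
by rewrite -eq_idx in Gt' *; apply: cP; rewrite ?inE.
Qed.

End DenumerablePartition.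

Lemma regular_open_nbhs_closure_sub {X : topologicalType} :
  regular_space X -> forall {x : X} {U}, nbhs x U ->
  exists2 V, open_nbhs x V & closure V `<=` U.
Proof.
move=> reg x U /reg[N]; rewrite nbhsE => -[V xV VN] clNU.
by exists V => //; apply: subset_trans clNU; exact: closureS.
Qed.

Lemma regular_open_cover_shrink {X : topologicalType} {C : set (set X)} :
  regular_space X -> (forall U, C U -> open U) -> \bigcup_(U in C) U = [set: X] ->
  exists U V : X -> set X, [/\ forall x, C (U x), forall x, open (V x),
    forall x, V x x & forall x, closure (V x) `<=` U x].
Proof.
move=> reg Copen Ccover.
have /choice[UV UVP] x : exists UV : set X * set X,
    [/\ C UV.1, open UV.2, UV.2 x & closure UV.2 `<=` UV.1].
  have [W CW Wx] : (\bigcup_(U in C) U) x by rewrite Ccover.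
  have [V [oV Vx] clVW] := regular_open_nbhs_closure_sub reg
    (open_nbhs_nbhs (conj (Copen W CW) Wx)).
  by exists (W, V).
by exists (fst \o UV), (snd \o UV); split => x; have [] := UVP x.
Qed.

Lemma closure_bigcup_seq {I : choiceType} {T : topologicalType}
    (s : seq I) (F : I -> set T) :
  closure (\bigcup_(i in [set` s]) F i) = \bigcup_(i in [set` s]) closure (F i).
Proof. by rewrite !bigcup_seq (big_morph closure (@closureU T) (closure0 T)). Qed.

Lemma cvg_closure_range {I : Type} {T : topologicalType} {F : set_system I}
    {FF : ProperFilter F} {f : I -> T} {z : T} :
  f @ F --> z -> closure (range f) z.
Proof.
move=> fz N /fz fN; have [i /= Ni] := filter_ex (fN : F (f @^-1` N)).
by exists (f i); split => //; exists i.
Qed.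

Section TotallySeq.
Variable T : eqType.

Definition totally_seq : set_system (seq T) :=
  filter_from [set: seq T] (fun s0 => [set s | {subset s0 <= s}]).

Global Instance totally_seq_filter : ProperFilter totally_seq.
Proof.
apply: filter_from_proper; last by move=> s0 _; exists s0.
apply: filter_from_filter; first by exists [::].
move=> s1 s2 _ _; exists (s1 ++ s2) => // s /= s12.
by split => x xs; apply: s12; rewrite mem_cat xs ?orbT.
Qed.

End TotallySeq.
Arguments totally_seq {T}.

Section OutsideIndicators.
Variables (R : realType) (X : topologicalType).

Lemma quasi_continuous_cst (c : R) : quasi_continuous (cst c : X -> R).
Proof.
move=> x U V oU Ux oV Vc; exists U; split => //; first by exists x.
by move=> _ [y _ <-].
Qed.

Lemma quasi_continuous_indic_closureC (W : set X) : open W ->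
  quasi_continuous (\1_(~` closure W) : X -> R).
Proof.
move=> oW x U V oU Ux oV; rewrite indicE.
have [clWx|nclWx] := pselect (closure W x).
  rewrite memNset // => V0.
  exists (U `&` W); split; first exact: openI.
  - by have [y [Wy Uy]] := clWx U (open_nbhs_nbhs (conj oU Ux)); exists y.
  - exact: subIsetl.
  move=> _ [y [_ Wy] <-]; rewrite indicE memNset //.
  by move/(_ (subset_closure Wy)).
rewrite mem_set // => V1; exists (U `&` ~` closure W); split.
- by apply: openI => //; rewrite openC; exact: closed_closure.
- by exists x.
- exact: subIsetl.
by move=> _ [y [_ nclWy] <-]; rewrite indicE mem_set.
Qed.

Lemma nbhs_ptws_lt (f : {ptws X -> R}) (t : X) (c : R) :
  f t < c -> nbhs f [set h : {ptws X -> R} | h t < c].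
Proof.
move=> ftc; suff : (proj t @ nbhs f) [set r : R | r < c] by [].
apply: (@proj_continuous X (fun=> R) t f).
by apply: open_nbhs_nbhs; split => //; exact: open_lt.
Qed.

Variable V : X -> set X.

Definition outside_indic (s : seq X) : {ptws X -> R} :=
  \1_(~` closure (\bigcup_(x in [set` s]) V x)).

Lemma quasi_continuous_outside_indic s :
  (forall x, open (V x)) -> quasi_continuous (outside_indic s).
Proof.
by move=> oV; apply: quasi_continuous_indic_closureC; exact: bigcup_open.
Qed.

Lemma outside_indic_cvg0 : (forall x, V x x) ->
  {ptws, outside_indic @ totally_seq --> cst 0}.
Proof.
move=> Vxx; apply/pointwise_cvgP => t N N0; exists [:: t] => // s /= ts.
rewrite /outside_indic indicE memNset; first exact: nbhs_singleton.
by apply; apply: subset_closure; exists t; [apply: ts; rewrite mem_head|].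
Qed.

Lemma outside_indic_lt1 s t :
  outside_indic s t < 1 -> exists2 x, x \in s & closure (V x) t.
Proof.
rewrite /outside_indic indicE.
have [|nclt] := pselect (closure (\bigcup_(x in [set` s]) V x) t).
  by rewrite closure_bigcup_seq => -[x xs Vxt] _; exists x.
by rewrite mem_set //= ltxx.
Qed.

End OutsideIndicators.

Theorem mainTheorem2 (R : realType) (X : topologicalType) :
  regular_space X ->
  forall K : Type, [set: nat] #<= [set: K] ->
    tightness_le (@QP R X) K -> lindelof_degree_le X K.
Proof.
move=> reg K; elim/Ppointed: K => K K_infinite.
  by move: K_infinite; rewrite emptyE => /eqP/seteqP[/(_ 0%N I)].
move=> tight C Copen Ccover.
have [U [V [CU oV Vxx clVU]]] := regular_open_cover_shrink reg Copen Ccover.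
pose g := outside_indic R X V.
have gQ : range g `<=` @QP R X.
  by move=> _ [s _ <-]; exact: quasi_continuous_outside_indic.
have [B [Bg BK clB0]] := tight _ _ (quasi_continuous_cst R X 0) gQ
  (cvg_closure_range (outside_indic_cvg0 R X V Vxx)).
have /choice[s_of s_ofP] b : exists s, B b -> g s = b.
  have [/Bg[s _ <-]|nBb] := pselect (B b); first by exists s.
  by exists [::] => /nBb.
exists (\bigcup_(b in B) U @` [set` s_of b]); split.
- by move=> _ [b _ [x _ <-]].
- apply: card_bigcup_countable_le => // b _.
  exact/finite_set_countable/finite_image/finite_seq.
apply/seteqP; split => // t _.
have [b [Bb bt]] := clB0 _ (nbhs_ptws_lt R X (cst 0) t 1 ltr01).
have gbt : g (s_of b) t < 1 by rewrite s_ofP.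
have [x xs clVxt] := outside_indic_lt1 R X V (s_of b) t gbt.
by exists (U x); [exists b => //; exists x | exact: clVU].
Qed.
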